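(* Let $\mathcal{F}$ be a monotone feature. Then the ip-function generators $\sigma^{\mathcal{F}}=\varrho^{\mathcal{F}}$ are balanced: for every graph $G=(V,E)$, every two filtering functions $f,g:E\to\mathbb{R}$ and every $h>0$ with $\sup_{e\in E}|f(e)-g(e)|\le h$, one has $\sigma^{\mathcal{F}}_{(G,f)}(u-h,v+h)\le\sigma^{\mathcal{F}}_{(G,g)}(u,v)$ for all $(u,v)\in\Delta^+$.
   Context: Graphs are finite simple undirected graphs; a weighted graph is $(G,f)$ with $f:E\to\mathbb{R}$. For $u\in\mathbb{R}$, $G_u=(V_u,E_u)$ is the subgraph induced by the edge set $f^{-1}((-\infty,u])$, $G_{+\infty}=G$. Only subgraphs induced by edge sets are considered. $\Delta^+=\{(u,v)\in\mathbb{R}\times(\mathbb{R}\cup\{+\infty\}):u<v\}$, with $+\infty+h=+\infty$. A feature $\mathcal{F}$ assigns to every graph $H=(V_H,E_H)$ a function $2^{V_H\cup E_H}\to\{true,false\}$. It is monotone if (i) for any graphs $G'=(V',E')\subset G''$ and any $X\subseteq V'\cup E'$, $\mathcal{F}(X)=true$ in $G''$ implies $\mathcal{F}(X)=true$ in $G'$; and (ii) in any graph, for $Y\subset X$, $\mathcal{F}(X)=true$ implies $\mathcal{F}(Y)=true$. $X\subseteq V\cup E$ is an $\mathcal{F}$-set at level $w$ in $(G,f)$ if $X\subseteq V_w\cup E_w$ and $\mathcal{F}(X)=true$ in $G_w$; steady at $(u,v)$ if an $\mathcal{F}$-set at all levels $w\in[u,v]$; ranging at $(u,v)$ if an $\mathcal{F}$-set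 at some level $w\le u$ and some level $w'\ge v$. $\sigma^{\mathcal{F}}_{(G,f)}(u,v)$, $\varrho^{\mathcal{F}}_{(G,f)}(u,v)$ are the numbers of steady, resp. ranging, $\mathcal{F}$-sets at $(u,v)$ (for monotone $\mathcal{F}$ these coincide). An ip-function generator $p$ (a map assigning to each weighted graph a function $p_{(G,f)}:\Delta^+\to\mathbb{Z}$ satisfying the persistence inequalities, invariant under isomorphism of weighted graphs) is balanced if whenever $\psi:G\to G'$ is a graph isomorphism and $\sup_{e\in E}|f(e)-f'(\psi(e))|\le h$ with $h>0$, then $p_{(G,f)}(u-h,v+h)\le p_{(G',f')}(u,v)$ for all $(u,v)\in\Delta^+$; equivalently, the single-graph condition stated in the claim holds. *)

From HB Require Import structures.
From mathcomp Require Import all_boot all_order all_algebra.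
From mathcomp Require Import boolp reals constructive_ereal.
Set Implicit Arguments. Unset Strict Implicit. Unset Printing Implicit Defensive.
Import Order.TTheory GRing.Theory Num.Theory.
Local Open Scope ring_scope.
Local Open Scope ereal_scope.

(* A graph is a pair
   (V, E) with V : {set T} and E a set of 2-element subsets of V (finite,
   simple, undirected).  Elements of V \cup E live in T + {set T}. *)
Definition is_graph (T : finType) (V : {set T}) (E : {set {set T}}) : bool :=
  [forall e in E, (#|e| == 2)%N && (e \subset V)].

Definition items (T : finType) (V : {set T}) (E : {set {set T}})
  : {set (T + {set T})} :=
  [set x | match x with inl v => v \in V | inr e => e \in E end].

(* A feature: to every graph (V,E) it assigns a boolean function on subsets of
   V \cup E (values outside of 2^(V \cup E) are irrelevant). *)
Definition feature (T : finType) :=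
  {set T} -> {set {set T}} -> {set (T + {set T})} -> bool.

Definition monotone_feature (T : finType) (F : feature T) : Prop :=
  (forall V' E' V'' E'' (X : {set (T + {set T})}),
      is_graph V' E' -> is_graph V'' E'' ->
      V' \subset V'' -> E' \subset E'' ->
      X \subset items V' E' ->
      F V'' E'' X -> F V' E' X)
  /\
  (forall V E (X Y : {set (T + {set T})}),
      is_graph V E -> X \subset items V E -> Y \subset X ->
      F V E X -> F V E Y).

Section Filt.
Context (T : finType) (R : realType).

(* Sublevel subgraph G_w induced by the edge set f^{-1}((-oo, w]);
   G_{+oo} = G. *)
Definition subE (E : {set {set T}}) (f : {set T} -> R) (w : \bar R)
  : {set {set T}} := [set e in E | (f e)%:E <= w].

Definition subV (V : {set T}) (E : {set {set T}}) (f : {set T} -> R)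
  (w : \bar R) : {set T} :=
  if w == +oo then V
  else [set x in V | [exists e in subE E f w, x \in e]].

Definition Fset_at (F : feature T) V E (f : {set T} -> R) (w : \bar R)
  (X : {set (T + {set T})}) : bool :=
  (X \subset items (subV V E f w) (subE E f w)) && F (subV V E f w) (subE E f w) X.

Definition steady (F : feature T) V E f (u : R) (v : \bar R) X : Prop :=
  forall w : \bar R, u%:E <= w -> w <= v -> Fset_at F V E f w X.

Definition ranging (F : feature T) V E f (u : R) (v : \bar R) X : Prop :=
  (exists w : R, (w <= u)%R /\ Fset_at F V E f w%:E X) /\
  (exists w' : \bar R, v <= w' /\ Fset_at F V E f w' X).

Definition sigmaF (F : feature T) V E f (u : R) (v : \bar R) : nat :=
  #|[set X : {set (T + {set T})} | `[< steady F V E f u v X >]]|.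

Definition rhoF (F : feature T) V E f (u : R) (v : \bar R) : nat :=
  #|[set X : {set (T + {set T})} | `[< ranging F V E f u v X >]]|.
End Filt.

From HB Require Import structures.
From mathcomp Require Import all_boot all_order all_algebra.
From mathcomp Require Import boolp reals constructive_ereal.
From mathcomp Require Import lra.
Import Order.TTheory GRing.Theory Num.Theory.
Local Open Scope ring_scope.

(* If |f - g| <= h on the edges, then the sublevel graphs are nested:
   G^f_{z-h} ⊆ G^g_z ⊆ G^f_{z+h}.  An F-set X for f at the levels z-h and
   z+h is therefore contained in G^g_z, and it is an F-set there because F
   passes from the larger graph G^f_{z+h} to the subgraph G^g_z.  Applying
   this at every level in [u, v] (resp. at u and at v) shows that every
   steady (resp. ranging) F-set for f at (u-h, v+h) is one for g at (u, v). *)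

Section Sublevel.
Set Implicit Arguments.
Unset Strict Implicit.
Context (T : finType) (R : realType).
Local Open Scope ereal_scope.

Lemma items_subset (V1 V2 : {set T}) (E1 E2 : {set {set T}}) :
  V1 \subset V2 -> E1 \subset E2 -> items V1 E1 \subset items V2 E2.
Proof.
move=> /subsetP sV /subsetP sE; apply/subsetP => -[x|x]; rewrite !inE.
- exact: sV.
- exact: sE.
Qed.

Lemma is_graph_sublevel (V : {set T}) (E : {set {set T}}) (f : {set T} -> R)
    (a : \bar R) :
  is_graph V E -> is_graph (subV V E f a) (subE E f a).
Proof.
move=> /forall_inP HG; apply/forall_inP => e eS.
have eE : e \in E by move: eS; rewrite inE => /andP[].
case/andP: (HG e eE) => -> /subsetP eV /=.
rewrite /subV; case: ifP => _; first exact/subsetP.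
apply/subsetP => x xe; rewrite inE eV //=.
by apply/existsP; exists e; rewrite eS.
Qed.

Lemma subV_subset (V : {set T}) (E : {set {set T}}) (f g : {set T} -> R)
    (a z : \bar R) :
  subE E f a \subset subE E g z -> (a = +oo -> z = +oo) ->
  subV V E f a \subset subV V E g z.
Proof.
move=> /subsetP sE aoo_zoo; rewrite /subV.
have [_|zNoo] := eqVneq z +oo.
  by case: ifP => _ //; apply/subsetP => x; rewrite inE => /andP[].
have [/aoo_zoo zoo|_] := eqVneq a +oo; first by rewrite zoo eqxx in zNoo.
apply/subsetP => x; rewrite !inE => /andP[xV /existsP[e /andP[eS xe]]].
by rewrite xV; apply/existsP; exists e; rewrite sE.
Qed.

Lemma subE_shift (E : {set {set T}}) (f g : {set T} -> R) (h : R)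
    (a z : \bar R) :
  (forall e, e \in E -> (g e <= f e + h)%R) -> a + h%:E <= z ->
  subE E f a \subset subE E g z.
Proof.
move=> gf az; apply/subsetP => e; rewrite !inE => /andP[eE fea].
rewrite eE /=; apply: le_trans az; apply: le_trans (leeD2r _ fea).
by rewrite -EFinD lee_fin gf.
Qed.

Lemma subV_shift (V : {set T}) (E : {set {set T}}) (f g : {set T} -> R)
    (h : R) (a z : \bar R) :
  (forall e, e \in E -> (g e <= f e + h)%R) -> a + h%:E <= z ->
  subV V E f a \subset subV V E g z.
Proof.
move=> gf az; apply: subV_subset; first exact: subE_shift gf az.
by move=> aoo; move: az; rewrite aoo /= leye_eq => /eqP.
Qed.

End Sublevel.

Section Shift.
Set Implicit Arguments.
Unset Strict Implicit.
Context (T : finType) (R : realType) (F : feature T) (HF : monotone_feature F).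
Context (V : {set T}) (E : {set {set T}}) (HG : is_graph V E).
Local Open Scope ereal_scope.

Lemma Fset_at_sandwich (f1 f2 g : {set T} -> R) (a b z : \bar R) X :
  subV V E f1 a \subset subV V E g z -> subE E f1 a \subset subE E g z ->
  subV V E g z \subset subV V E f2 b -> subE E g z \subset subE E f2 b ->
  Fset_at F V E f1 a X -> Fset_at F V E f2 b X -> Fset_at F V E g z X.
Proof.
move=> sV1 sE1 sV2 sE2 /andP[Xa _] /andP[_ FXb].
have Xz : X \subset items (subV V E g z) (subE E g z).
  exact: subset_trans Xa (items_subset sV1 sE1).
rewrite /Fset_at Xz /=.
by apply: HF.1 FXb => //; apply: is_graph_sublevel.
Qed.

Context (f g : {set T} -> R) (h : R).
Hypothesis hfg : forall e, e \in E -> (`|f e - g e| <= h)%R.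

Lemma Fset_at_shift (a b z : \bar R) X :
  a + h%:E <= z -> z + h%:E <= b ->
  Fset_at F V E f a X -> Fset_at F V E f b X -> Fset_at F V E g z X.
Proof.
have gf e : e \in E -> (g e <= f e + h)%R.
  by move/hfg; rewrite ler_norml => /andP[? ?]; lra.
have fg e : e \in E -> (f e <= g e + h)%R.
  by move/hfg; rewrite ler_norml => /andP[? ?]; lra.
move=> az zb; apply: Fset_at_sandwich.
- exact: subV_shift gf az.
- exact: subE_shift gf az.
- exact: subV_shift fg zb.
- exact: subE_shift fg zb.
Qed.

Lemma steady_shift (u : R) (v : \bar R) X : (0 <= h)%R ->
  steady F V E f (u - h) (v + h%:E) X -> steady F V E g u v X.
Proof.
move=> h_ge0 Xf z uz zv.
have uhz : (u - h)%:E + h%:E <= z by rewrite -EFinD subrK.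
have uv : u%:E <= v := le_trans uz zv.
have uh_vh : (u - h)%:E <= v + h%:E.
  by apply: le_trans (leeD2r h%:E uv); rewrite -EFinD lee_fin; lra.
apply: (Fset_at_shift uhz (leeD2r _ zv)); apply: Xf; by rewrite ?lexx.
Qed.

Lemma ranging_shift (u : R) (v : \bar R) X :
  u%:E <= v ->
  ranging F V E f (u - h) (v + h%:E) X -> ranging F V E g u v X.
Proof.
move=> uv [[w [wu Xw]] [w' [vw' Xw']]].
have whu : w%:E + h%:E <= u%:E by rewrite -EFinD lee_fin -lerBrDr.
split.
- exists u; split; first exact: lexx.
  apply: (Fset_at_shift whu _ Xw Xw').
  exact: le_trans (leeD2r _ uv) vw'.
- exists v; split; first exact: lexx.
  exact: (Fset_at_shift (le_trans whu uv) vw' Xw Xw').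
Qed.

End Shift.

Lemma leq_card_asbool (A : finType) (P Q : A -> Prop) :
  (forall x, P x -> Q x) ->
  (#|[set x | `[< P x >]]| <= #|[set x | `[< Q x >]]|)%N.
Proof.
move=> PQ; apply: subset_leq_card; apply/subsetP => x.
by rewrite !inE => /asboolP /PQ /asboolP.
Qed.

Theorem proposition4 (T : finType) (R : realType) (F : feature T)
  (HF : monotone_feature F)
  (V : {set T}) (E : {set {set T}}) (HG : is_graph V E)
  (f g : {set T} -> R) (h : R) (hpos : 0 < h)
  (hfg : forall e, e \in E -> `|f e - g e| <= h) :
  forall (u : R) (v : \bar R), (u%:E < v)%E ->
    (sigmaF F V E f (u - h) (v + h%:E)%E <= sigmaF F V E g u v)%N /\
    (rhoF F V E f (u - h) (v + h%:E)%E <= rhoF F V E g u v)%N.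
Proof.
move=> u v uv; split; apply: leq_card_asbool => X.
- exact: (steady_shift HF HG hfg (ltW hpos) (X:=X)).
- exact: (ranging_shift HF HG hfg (X:=X) (ltW uv)).
Qed.
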